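(* Let $n\ge2$. The metric $g_{ij}(p)=\left(\frac{1}{n-1}-\delta_{ij}\right)p_ip_j$ on $\{p\in\mathbb{C}^n: p_i\neq0\ \forall i\}$ is flat. *)

From HB Require Import structures.
From mathcomp Require Import all_boot all_order all_algebra.
From mathcomp Require Import all_classical all_reals all_analysis.
From mathcomp Require Import complex.
Set Implicit Arguments. Unset Strict Implicit. Unset Printing Implicit Defensive.
Import Order.TTheory GRing.Theory Num.Theory.
Import numFieldNormedType.Exports.
Local Open Scope ring_scope.

Section Geometry.
Variable C : numFieldType.
Variable n : nat.

(* Holomorphic (C-linear) partial derivative along the j-th coordinate
   of F : C^n -> C at p:  lim_{h -> 0, h in C} (F(p + h e_j) - F p)/h. *)
Definition pderiv (j : 'I_n) (F : 'rV[C]_n -> C) (p : 'rV[C]_n) : C :=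
  derive1 (fun t : C => F (p + t *: delta_mx 0 j)) 0.

Definition christoffel (G : 'rV[C]_n -> 'M[C]_n) (p : 'rV[C]_n)
    (l i j : 'I_n) : C :=
  2^-1 * \sum_(m < n) (invmx (G p)) l m *
     (pderiv i (fun q => G q m j) p + pderiv j (fun q => G q m i) p
      - pderiv m (fun q => G q i j) p).

Definition riemann (G : 'rV[C]_n -> 'M[C]_n) (p : 'rV[C]_n)
    (l i j k : 'I_n) : C :=
  pderiv j (fun q => christoffel G q l i k) p
  - pderiv k (fun q => christoffel G q l i j) p
  + \sum_(m < n) (christoffel G p l j m * christoffel G p m i k
                  - christoffel G p l k m * christoffel G p m i j).

Definition flat_metric_on (U : set 'rV[C]_n) (G : 'rV[C]_n -> 'M[C]_n) : Prop :=
  forall p, U p ->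
    [/\ (G p)^T = G p, G p \in unitmx &
        forall l i j k : 'I_n, riemann G p l i j k = 0].

End Geometry.

Definition torus (C : numFieldType) (n : nat) : set 'rV[C]_n :=
  [set p | forall i : 'I_n, p 0 i != 0].

Definition paper_metric (C : numFieldType) (n : nat) (p : 'rV[C]_n) : 'M[C]_n :=
  \matrix_(a < n, b < n) ((((n - 1)%:R)^-1 - (a == b)%:R) * p 0 a * p 0 b).

From HB Require Import structures.
From mathcomp Require Import all_boot all_order all_algebra.
From mathcomp Require Import all_classical all_reals all_analysis.
From mathcomp Require Import complex.
From mathcomp Require Import ring.
Set Implicit Arguments.
Unset Strict Implicit.
Unset Printing Implicit Defensive.
Import Order.TTheory GRing.Theory Num.Theory.
Import numFieldNormedType.Exports.
Local Open Scope ring_scope.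

(* In the coordinates w_i = p_i^2 / 2 we have dw_i = p_i dp_i, so the metric
   reads sum_ij (1/(n-1) - δ_ij) dw_i dw_j and has constant coefficients.
   Concretely: (1/(n-1)) J - I has inverse J - I (J the all-ones matrix), so
   g^ij = (1 - δ_ij) / (p_i p_j), and the Christoffel symbols are
   Γ^l_ij = δ_li δ_ij / p_l.  Since Γ^l_ik depends on p_l only and vanishes
   unless l = i = k, the two derivative terms of the curvature cancel, and the
   quadratic term δ_lj δ_jm δ_mi δ_ik / (p_l p_m) is symmetric in j and k. *)

Lemma derive1_affine_mul0 (C : numFieldType) (k a u b v : C) :
  derive1 (fun t : C => k * (a + t * u) * (b + t * v)) 0 = k * (u * b + a * v).
Proof.
rewrite derive1E.
have dcst (w : C) : is_derive (0 : C) (1 : C) (cst w) 0 by exact: is_derive_cst.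
have did : is_derive (0 : C) (1 : C) id 1 by exact: is_derive_id.
have := is_deriveM (is_deriveM (dcst k) (is_deriveD (dcst a) (is_deriveM did (dcst u))))
  (is_deriveD (dcst b) (is_deriveM did (dcst v))).
move=> /(@derive_val _ _ _ _ _ _ _) ->.
rewrite /GRing.scale /= !fctE /=; ring.
Qed.

Lemma pderiv_near_const (C : numFieldType) (n : nat) (j : 'I_n)
    (F : 'rV[C]_n -> C) (p : 'rV[C]_n) :
  (\forall t \near (0 : C), F (p + t *: delta_mx 0 j) = F p) -> pderiv j F p = 0.
Proof.
move=> Fp; rewrite /pderiv derive1E.
by rewrite (@near_eq_derive _ _ _ _ (cst (F p))) ?derive_cst.
Qed.

Lemma near_torus_shift (C : numFieldType) (n : nat) (j : 'I_n) (p : 'rV[C]_n) :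
  torus p -> \forall t \near (0 : C), torus (p + t *: delta_mx 0 j).
Proof.
move=> tp; have : \forall t \near (0 : C), `|t| < `|p 0 j|.
  by apply: nbhs0_lt; rewrite normr_gt0 tp.
apply: filterS => t ht i; rewrite !mxE eqxx /=.
case: (eqVneq i j) => [->|_]; last by rewrite mulr0 addr0 tp.
rewrite mulr1 addr_eq0; apply: contraTneq ht => ->.
by rewrite normrN ltxx.
Qed.

Section PaperMetric.
Variables (C : numFieldType) (n : nat).
Hypothesis n_ge2 : (2 <= n)%N.

Local Notation δ a b := ((a == b)%:R : C).
Local Notation c := ((n - 1)%:R^-1 : C).
Local Notation g := (@paper_metric C n).

Lemma natr_n1_neq0 : (n - 1)%:R != 0 :> C.
Proof. by rewrite pnatr_eq0 subn_eq0 -ltnNge. Qed.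

Lemma sum_delta_mull (b : 'I_n) (x : 'I_n -> C) : \sum_k δ k b * x k = x b.
Proof.
rewrite (bigD1 b) //= eqxx mul1r big1 ?addr0 // => k /negPf ->.
by rewrite mul0r.
Qed.

Lemma sum_metric_coef_mul (a b : 'I_n) :
  \sum_k (c - δ a k) * (1 - δ k b) = δ a b.
Proof.
rewrite (eq_bigr (fun k => c - δ k b * c - δ k a * 1 + δ k a * δ k b)); last first.
  by move=> k _; rewrite [a == k]eq_sym; ring.
rewrite big_split !sumrB /= sumr_const card_ord !sum_delta_mull eq_sym.
have c_n1 : c *+ (n - 1) = 1 by rewrite -(mulr_natr c) mulVf ?natr_n1_neq0.
by rewrite -[n in c *+ n](subnK (ltnW n_ge2)) addn1 mulrS c_n1; ring.
Qed.

Definition paper_metric_inv (q : 'rV[C]_n) : 'M[C]_n :=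
  \matrix_(a, b) ((1 - δ a b) / (q 0 a * q 0 b)).

Lemma paper_metricK (q : 'rV[C]_n) :
  torus q -> g q *m paper_metric_inv q = 1%:M.
Proof.
move=> tq; apply/matrixP => a b; rewrite !mxE.
under eq_bigr => k _ do rewrite !mxE.
transitivity (\sum_k (q 0 a / q 0 b) * ((c - δ a k) * (1 - δ k b))).
  by apply: eq_bigr => k _; field; rewrite ?natr_n1_neq0 ?tq.
rewrite -mulr_sumr sum_metric_coef_mul.
by case: eqVneq => [->|]; rewrite ?mulr0 ?mulr1 // mulfV ?tq.
Qed.

Lemma paper_metric_unit (q : 'rV[C]_n) : torus q -> g q \in unitmx.
Proof. by move=> /paper_metricK /mulmx1_unit[]. Qed.

Lemma invmx_paper_metric (q : 'rV[C]_n) :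
  torus q -> invmx (g q) = paper_metric_inv q.
Proof.
move=> tq; rewrite -[invmx _]mulmx1 -(paper_metricK tq) mulmxA.
by rewrite mulVmx ?mul1mx ?paper_metric_unit.
Qed.

Lemma pderiv_paper_metric (i a b : 'I_n) (q : 'rV[C]_n) :
  pderiv i (fun q => g q a b) q = (c - δ a b) * (δ i a * q 0 b + q 0 a * δ i b).
Proof.
rewrite /pderiv -derive1_affine_mul0; congr derive1; apply/funext => t.
by rewrite !mxE eqxx [a == i]eq_sym [b == i]eq_sym.
Qed.

Lemma christoffel_bracket (i j m : 'I_n) (x : 'I_n -> C) :
  (c - δ m j) * (δ i m * x j + x m * δ i j)
  + (c - δ m i) * (δ j m * x i + x m * δ j i)
  - (c - δ i j) * (δ m i * x j + x i * δ m j)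
  = 2 * δ i j * x m * (c - δ i m).
Proof.
case: (eqVneq i m) => [<-|_]; last case: (eqVneq j m) => [<-|_];
  by case: (eqVneq i j) => [<-|_]; rewrite ?eqxx /=; ring.
Qed.

Lemma christoffel_paper_metric (q : 'rV[C]_n) (l i j : 'I_n) :
  torus q -> christoffel g q l i j = δ l i * δ i j / q 0 l.
Proof.
move=> tq; rewrite /christoffel invmx_paper_metric //.
under eq_bigr => m _ do rewrite !pderiv_paper_metric christoffel_bracket mxE.
transitivity (2^-1 * \sum_m (2 * δ i j / q 0 l) * ((c - δ i m) * (1 - δ m l))).
  congr (_ * _); apply: eq_bigr => m _; rewrite [l == m]eq_sym.
  by field; rewrite natr_n1_neq0 !tq.
rewrite -mulr_sumr sum_metric_coef_mul [i == l]eq_sym.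
by field; apply: tq.
Qed.

Lemma pderiv_christoffel_paper_metric_eq0 (p : 'rV[C]_n) (j l i k : 'I_n) :
  torus p -> ~~ [&& l == i, i == k & j == l] ->
  pderiv j (fun q => christoffel g q l i k) p = 0.
Proof.
move=> tp not_all_eq; apply: pderiv_near_const.
apply: filterS (near_torus_shift j tp) => t tt.
rewrite !christoffel_paper_metric // !mxE /=.
case: (eqVneq l j) => [lj|_]; last by rewrite mulr0 addr0.
rewrite -lj eqxx andbT in not_all_eq.
by rewrite -natrM mulnb (negPf not_all_eq) !mul0r.
Qed.

Lemma delta_chain_swap (l j m i k : 'I_n) :
  δ l j * δ j m * (δ m i * δ i k) = δ l k * δ k m * (δ m i * δ i j).
Proof.
rewrite -!natrM !mulnb; congr (_%:R); congr (nat_of_bool _).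
by apply/idP/idP => /andP[/andP[/eqP-> /eqP->] /andP[/eqP-> /eqP->]]; rewrite !eqxx.
Qed.

Lemma riemann_paper_metric (p : 'rV[C]_n) :
  torus p -> forall l i j k : 'I_n, riemann g p l i j k = 0.
Proof.
move=> tp l i j k; rewrite /riemann big1 ?addr0 => [|m _]; last first.
  rewrite !christoffel_paper_metric // [X in X - _]mulrACA [X in _ - X]mulrACA.
  by rewrite delta_chain_swap subrr.
have [/and3P[/eqP<- /eqP<- /eqP->]|not_all_eq] :=
  boolP [&& l == i, i == j & k == l]; first by rewrite subrr.
rewrite !pderiv_christoffel_paper_metric_eq0 ?subrr //;
  by apply: contra not_all_eq => /and3P[/eqP<- /eqP<- /eqP<-]; rewrite !eqxx.
Qed.

Lemma paper_metric_flat : flat_metric_on (@torus C n) g.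
Proof.
move=> p tp; split; last exact: riemann_paper_metric.
- by apply/matrixP => a b; rewrite !mxE eq_sym mulrAC.
- exact: paper_metric_unit.
Qed.

End PaperMetric.

Local Open Scope complex_scope.

Theorem mainTheorem7 (R : realType) (n : nat) (hn : (2 <= n)%N) :
  flat_metric_on (@torus (complex R) n) (@paper_metric (complex R) n).
Proof. exact: paper_metric_flat hn. Qed.
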